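(* Let $\mathbb X=\mathbb X^1\times\mathbb X^2$, let $S\colon\mathbb X^1\rightrightarrows\mathbb X^2$ have closed graph, let $\Omega\subset\mathbb X^1$ be closed, and define $\Phi\colon\mathbb X\rightrightarrows\mathbb X^1\times\mathbb X^2$ by $\Phi(x):=(\Omega-x^1,\,S(x^1)-x^2)$ for $x=(x^1,x^2)$. Fix $(\bar x,0)\in\operatorname{gph}\Phi$ and $u=(u^1,u^2)\in\mathbb S_{\mathbb X}$. Write $y=(y^1,y^2)$ for elements of $\mathbb X^1\times\mathbb X^2$. (i) Suppose there is no nonzero $\lambda\in D^*S((\bar x^1,\bar x^2);(u^1,u^2))(0)\cap(-\mathcal N_\Omega(\bar x^1;u^1))$ for which there exist sequences $\{(x_k,y_k)\}\subset\operatorname{gph}\Phi$ with $x_k\ne\bar x$, $\{\lambda_k\},\{\eta_k\}\subset\mathbb X^1$, $\{\mu_k\}\subset\mathbb X^2$ with $x_k\to\bar x$, $y_k\to0$, $\lambda_k\to\lambda$, $\mu_k\to0$, $\eta_k\to0$, $(x_k-\bar x)/\|x_k-\bar x\|\to u$, $y_k/\|x_k-\bar x\|\to0$, and, for all $k$, $\eta_k+\lambda_k\in\widehat D^*S(x_k^1,x_k^2+y_k^2)(\mu_k)$, $-\lambda_k\in\widehat{\mathcal N}_\Omega(x_k^1+y_k^1)$, and $\langle\lambda,y_k^1\rangle>0$. Then $\Phi$ is pseudo-normal at $(\bar x,0)$ in direction $u$. (ii) Let $\mathcal E^j=\{e^j_1,\dots,e^j_{m_j}\}$ be an orthonormal basis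 of $\mathbb X^j$, $j=1,2$. Suppose there is no nonzero $\lambda$ as in (i) for which there exist sequences as in (i) satisfying the same convergences and, for all $k$ and $i\in\{1,\dots,m_1\}$, $\eta_k+\lambda_k\in\widehat D^*S(x_k^1,x_k^2+y_k^2)(\mu_k)$, $-\lambda_k\in\widehat{\mathcal N}_\Omega(x_k^1+y_k^1)$, and $\langle\lambda,e^1_i\rangle\langle y_k^1,e^1_i\rangle>0$ whenever $\langle\lambda,e^1_i\rangle\ne0$. Then $\Phi$ is quasi-normal at $(\bar x,0)$ in direction $u$ w.r.t. the orthonormal basis $\mathcal E^1\times\mathcal E^2$ of $\mathbb X$ (i.e. $\{(e^1_i,0)\}\cup\{(0,e^2_j)\}$).
   Context: $\widehat{\mathcal N}_\Omega$ regular normal cone; $\mathcal N_\Omega(\bar x^1;u^1)$ directional limiting normal cone (limits of $\eta_k\in\widehat{\mathcal N}_\Omega(\bar x^1+t_kw_k)$, $w_k\to u^1$, $t_k\searrow0$). $\widehat D^*S(x^1,x^2)(\mu)=\{\xi\mid(\xi,-\mu)\in\widehat{\mathcal N}_{\operatorname{gph}S}(x^1,x^2)\}$; $D^*S((\bar x^1,\bar x^2);(u^1,u^2))(\mu)=\{\xi\mid(\xi,-\mu)\in\mathcal N_{\operatorname{gph}S}((\bar x^1,\bar x^2);(u^1,u^2))\}$. Directional pseudo-/quasi-normality of a closed-graph map $\Phi\colon\mathbb X\rightrightarrows\mathbb Y$ at $(\bar x,\bar y)$ in direction $u$: there is no nonzero $\lambda$ with $0\in D^*\Phi((\bar x,\bar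 y);(u,0))(\lambda)$ for which there exist $\{(x_k,y_k)\}\subset\operatorname{gph}\Phi$, $x_k\ne\bar x$, $\{\lambda_k\}\subset\mathbb Y$, $\{\eta_k\}\subset\mathbb X$ with $x_k\to\bar x$, $y_k\to\bar y$, $\lambda_k\to\lambda$, $\eta_k\to0$, $(x_k-\bar x)/\|x_k-\bar x\|\to u$, $(y_k-\bar y)/\|x_k-\bar x\|\to0$, $\eta_k\in\widehat D^*\Phi(x_k,y_k)(\lambda_k)$ for all $k$, and (pseudo) $\langle\lambda,y_k-\bar y\rangle>0$ for all $k$, resp. (quasi, w.r.t. orthonormal basis $\{e_i\}$ of $\mathbb Y$) $\langle\lambda,e_i\rangle\langle y_k-\bar y,e_i\rangle>0$ whenever $\langle\lambda,e_i\rangle\ne0$. *)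

(* Euclidean spaces X^j are modelled as 'rV[R]_n over R : realType
   with the standard inner product; products X^1 x X^2 as 'rV_(n1+n2) via row_mx. *)
From HB Require Import structures.
From mathcomp Require Import all_boot all_order all_algebra.
From mathcomp Require Import reals.
Set Implicit Arguments. Unset Strict Implicit. Unset Printing Implicit Defensive.
Import Order.TTheory GRing.Theory Num.Theory.
Local Open Scope ring_scope.

Section Defs.
Variable R : realType.

Definition dotv n (u v : 'rV[R]_n) : R := \sum_(i < n) u 0 i * v 0 i.
Definition enorm n (u : 'rV[R]_n) : R := Num.sqrt (dotv u u).

Definition seq_cvg n (f : nat -> 'rV[R]_n) (l : 'rV[R]_n) : Prop :=
  forall e : R, 0 < e -> exists N : nat, forall k : nat, (N <= k)%N -> enorm (f k - l) < e.
Definition rseq_cvg (f : nat -> R) (l : R) : Prop :=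
  forall e : R, 0 < e -> exists N : nat, forall k : nat, (N <= k)%N -> `|f k - l| < e.

Definition closed_set n (A : 'rV[R]_n -> Prop) : Prop :=
  forall (f : nat -> 'rV[R]_n) (l : 'rV[R]_n), (forall k, A (f k)) -> seq_cvg f l -> A l.

Definition unit_sphere n (u : 'rV[R]_n) : Prop := enorm u = 1.

Definition reg_normal n (A : 'rV[R]_n -> Prop) (x v : 'rV[R]_n) : Prop :=
  A x /\ forall eps : R, 0 < eps -> exists2 delta : R, 0 < delta &
    forall x' : 'rV[R]_n, A x' -> enorm (x' - x) < delta ->
      dotv v (x' - x) <= eps * enorm (x' - x).

Definition dir_normal n (A : 'rV[R]_n -> Prop) (xb u v : 'rV[R]_n) : Prop :=
  exists (t : nat -> R) (w eta : nat -> 'rV[R]_n),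
    [/\ (forall k, 0 < t k), rseq_cvg t 0, seq_cvg w u, seq_cvg eta v &
        forall k, reg_normal A (xb + t k *: w k) (eta k)].

(* set-valued maps S : X ==> Y are relations 'rV_n -> 'rV_m -> Prop (y \in S x) *)
Definition gph n m (S : 'rV[R]_n -> 'rV[R]_m -> Prop) : 'rV[R]_(n + m) -> Prop :=
  fun z => S (lsubmx z) (rsubmx z).

Definition reg_coderiv n m (S : 'rV[R]_n -> 'rV[R]_m -> Prop)
  (x : 'rV[R]_n) (y mu : 'rV[R]_m) (xi : 'rV[R]_n) : Prop :=
  reg_normal (gph S) (row_mx x y) (row_mx xi (- mu)).

Definition dir_coderiv n m (S : 'rV[R]_n -> 'rV[R]_m -> Prop)
  (x : 'rV[R]_n) (y : 'rV[R]_m) (u : 'rV[R]_n) (v : 'rV[R]_m)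
  (mu : 'rV[R]_m) (xi : 'rV[R]_n) : Prop :=
  dir_normal (gph S) (row_mx x y) (row_mx u v) (row_mx xi (- mu)).

(* Existence of a "bad" multiplier lambda with sequences, for the directional
   pseudo-/quasi-normality definitions; cond lam (y_k - yb) is the sign condition. *)
Definition dir_normality_violated n m (Phi : 'rV[R]_n -> 'rV[R]_m -> Prop)
  (xb : 'rV[R]_n) (yb : 'rV[R]_m) (u : 'rV[R]_n)
  (cond : 'rV[R]_m -> 'rV[R]_m -> Prop) : Prop :=
  exists lam : 'rV[R]_m, lam != 0 /\ dir_coderiv Phi xb yb u 0 lam 0 /\
  exists (x : nat -> 'rV[R]_n) (y : nat -> 'rV[R]_m)
         (lamk : nat -> 'rV[R]_m) (eta : nat -> 'rV[R]_n),
    (forall k, Phi (x k) (y k)) /\ (forall k, x k != xb) /\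
    seq_cvg x xb /\ seq_cvg y yb /\ seq_cvg lamk lam /\ seq_cvg eta 0 /\
    seq_cvg (fun k => (enorm (x k - xb))^-1 *: (x k - xb)) u /\
    seq_cvg (fun k => (enorm (x k - xb))^-1 *: (y k - yb)) 0 /\
    (forall k, reg_coderiv Phi (x k) (y k) (lamk k) (eta k)) /\
    (forall k, cond lam (y k - yb)).

Definition dir_pseudo_normal n m (Phi : 'rV[R]_n -> 'rV[R]_m -> Prop)
  (xb : 'rV[R]_n) (yb : 'rV[R]_m) (u : 'rV[R]_n) : Prop :=
  ~ dir_normality_violated Phi xb yb u (fun lam d => 0 < dotv lam d).

Definition dir_quasi_normal n m (Phi : 'rV[R]_n -> 'rV[R]_m -> Prop)
  (xb : 'rV[R]_n) (yb : 'rV[R]_m) (u : 'rV[R]_n) (e : 'I_m -> 'rV[R]_m) : Prop :=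
  ~ dir_normality_violated Phi xb yb u
      (fun lam d => forall i : 'I_m, dotv lam (e i) != 0 ->
                      0 < dotv lam (e i) * dotv d (e i)).

Definition orthonormal_basis m (e : 'I_m -> 'rV[R]_m) : Prop :=
  forall i j : 'I_m, dotv (e i) (e j) = (i == j)%:R.

Definition prod_basis n1 n2 (e1 : 'I_n1 -> 'rV[R]_n1) (e2 : 'I_n2 -> 'rV[R]_n2)
  : 'I_(n1 + n2) -> 'rV[R]_(n1 + n2) :=
  fun i => match split i with
           | inl a => row_mx (e1 a) 0
           | inr b => row_mx 0 (e2 b)
           end.

(* Phi(x) := (Omega - x^1, S(x^1) - x^2) *)
Definition PhiOS n1 n2 (Omega : 'rV[R]_n1 -> Prop) (S : 'rV[R]_n1 -> 'rV[R]_n2 -> Prop)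
  : 'rV[R]_(n1 + n2) -> 'rV[R]_(n1 + n2) -> Prop :=
  fun x y => Omega (lsubmx y + lsubmx x) /\ S (lsubmx x) (rsubmx y + rsubmx x).

Definition thm7_violated n1 n2 (Omega : 'rV[R]_n1 -> Prop)
  (S : 'rV[R]_n1 -> 'rV[R]_n2 -> Prop) (xb1 : 'rV[R]_n1) (xb2 : 'rV[R]_n2)
  (u1 : 'rV[R]_n1) (u2 : 'rV[R]_n2) (cond : 'rV[R]_n1 -> 'rV[R]_n1 -> Prop) : Prop :=
  exists lam : 'rV[R]_n1, lam != 0 /\ dir_coderiv S xb1 xb2 u1 u2 0 lam /\
    dir_normal Omega xb1 u1 (- lam) /\
  exists (x y : nat -> 'rV[R]_(n1 + n2)) (lamk eta : nat -> 'rV[R]_n1)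
         (mu : nat -> 'rV[R]_n2),
    (forall k, PhiOS Omega S (x k) (y k)) /\
    (forall k, x k != row_mx xb1 xb2) /\
    seq_cvg x (row_mx xb1 xb2) /\ seq_cvg y 0 /\ seq_cvg lamk lam /\
    seq_cvg mu 0 /\ seq_cvg eta 0 /\
    seq_cvg (fun k => (enorm (x k - row_mx xb1 xb2))^-1 *: (x k - row_mx xb1 xb2))
            (row_mx u1 u2) /\
    seq_cvg (fun k => (enorm (x k - row_mx xb1 xb2))^-1 *: y k) 0 /\
    (forall k, reg_coderiv S (lsubmx (x k)) (rsubmx (x k) + rsubmx (y k)) (mu k)
                 (eta k + lamk k)) /\
    (forall k, reg_normal Omega (lsubmx (x k) + lsubmx (y k)) (- lamk k)) /\
    (forall k, cond lam (lsubmx (y k))).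

End Defs.

(* The graph of Phi is a linear image of Omega x gph S with one free block:
   (x, y) lies in gph Phi iff y^1 + x^1 lies in Omega and (x^1, y^2 + x^2) in
   gph S, while (x^2, y^2) can be moved along (v, -v) without leaving it.
   Testing a regular normal (xi, z) of gph Phi at (x, y) against these moves
   shows that z^1 is a regular normal to Omega at y^1 + x^1, that
   (xi^1 - z^1, z^2) is a regular normal to gph S at (x^1, y^2 + x^2), and
   that xi^2 = z^2.  Applied along the sequences defining the directional
   limiting normals and along the sequences in the definition of normality,
   this turns any multiplier lambda violating directional pseudo- or
   quasi-normality of Phi into the multiplier lambda^1 violating the
   hypothesis of the theorem; lambda^2 = 0 because xi^2 = z^2 for the
   limiting normal (xi, z) = (0, -lambda). *)
From HB Require Import structures.
From mathcomp Require Import all_boot all_order all_algebra.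
From mathcomp Require Import reals.
From mathcomp Require Import ring lra.
Set Implicit Arguments. Unset Strict Implicit. Unset Printing Implicit Defensive.
Import Order.TTheory GRing.Theory Num.Theory.
Local Open Scope ring_scope.

Section EuclideanNorm.
Variable R : realType.
Implicit Types n m : nat.

Lemma dotvC n (a b : 'rV[R]_n) : dotv a b = dotv b a.
Proof. by apply: eq_bigr => i _; rewrite mulrC. Qed.

Lemma dotvDl n (a b c : 'rV[R]_n) : dotv (a + b) c = dotv a c + dotv b c.
Proof. by rewrite /dotv -big_split; apply: eq_bigr => i _; rewrite mxE mulrDl. Qed.

Lemma dotvZl n k (a b : 'rV[R]_n) : dotv (k *: a) b = k * dotv a b.
Proof. by rewrite /dotv mulr_sumr; apply: eq_bigr => i _; rewrite mxE mulrA. Qed.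

Lemma dotvNl n (a b : 'rV[R]_n) : dotv (- a) b = - dotv a b.
Proof. by rewrite -scaleN1r dotvZl mulN1r. Qed.

Lemma dotvBl n (a b c : 'rV[R]_n) : dotv (a - b) c = dotv a c - dotv b c.
Proof. by rewrite dotvDl dotvNl. Qed.

Lemma dotv0l n (a : 'rV[R]_n) : dotv 0 a = 0.
Proof. by rewrite -(scale0r 0) dotvZl mul0r. Qed.

Lemma dotvDr n (a b c : 'rV[R]_n) : dotv c (a + b) = dotv c a + dotv c b.
Proof. by rewrite dotvC dotvDl !(dotvC c). Qed.

Lemma dotvZr n k (a b : 'rV[R]_n) : dotv a (k *: b) = k * dotv a b.
Proof. by rewrite dotvC dotvZl dotvC. Qed.

Lemma dotvNr n (a b : 'rV[R]_n) : dotv a (- b) = - dotv a b.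
Proof. by rewrite dotvC dotvNl dotvC. Qed.

Lemma dotvBr n (a b c : 'rV[R]_n) : dotv c (a - b) = dotv c a - dotv c b.
Proof. by rewrite dotvDr dotvNr. Qed.

Lemma dotv0r n (a : 'rV[R]_n) : dotv a 0 = 0.
Proof. by rewrite dotvC dotv0l. Qed.

Lemma dotv_row n m (a c : 'rV[R]_n) (b d : 'rV[R]_m) :
  dotv (row_mx a b) (row_mx c d) = dotv a c + dotv b d.
Proof.
by rewrite /dotv big_split_ord; congr (_ + _); apply: eq_bigr => i _;
  rewrite ?row_mxEl ?row_mxEr.
Qed.

Lemma dotv_row0l n m (a : 'rV[R]_n) (v : 'rV[R]_(n + m)) :
  dotv (row_mx a 0) v = dotv a (lsubmx v).
Proof. by rewrite -{1}[v]hsubmxK dotv_row dotv0l addr0. Qed.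

Lemma dotv_ge0 n (a : 'rV[R]_n) : 0 <= dotv a a.
Proof. by apply: sumr_ge0 => i _; rewrite -expr2 sqr_ge0. Qed.

Lemma dotv_eq0 n (a : 'rV[R]_n) : dotv a a = 0 -> a = 0.
Proof.
move/eqP; rewrite psumr_eq0 => [/allP a0|i _]; last by rewrite -expr2 sqr_ge0.
apply/matrixP => i j; rewrite ord1 mxE.
by have := a0 j (mem_index_enum j); rewrite /= mulf_eq0 orbb => /eqP.
Qed.

Lemma cauchy_schwarz n (a b : 'rV[R]_n) : dotv a b ^+ 2 <= dotv a a * dotv b b.
Proof.
have [/dotv_eq0 -> | b0] := eqVneq (dotv b b) 0.
  by rewrite dotv0r dotv0l expr0n mulr0.
have bb0 : 0 < dotv b b by rewrite lt_def b0 dotv_ge0.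
have := dotv_ge0 (dotv b b *: a - dotv a b *: b).
rewrite !(dotvBl, dotvBr, dotvZl, dotvZr) (dotvC b a) => h.
have : 0 <= dotv b b * (dotv a a * dotv b b - dotv a b ^+ 2).
  by move: h; congr (_ <= _); ring.
by rewrite pmulr_rge0 // subr_ge0.
Qed.

Lemma enorm_ge0 n (a : 'rV[R]_n) : 0 <= enorm a.
Proof. exact: sqrtr_ge0. Qed.

Lemma enorm_sq n (a : 'rV[R]_n) : enorm a ^+ 2 = dotv a a.
Proof. by rewrite sqr_sqrtr // dotv_ge0. Qed.

Lemma enorm_eq0 n (a : 'rV[R]_n) : enorm a = 0 -> a = 0.
Proof. by move=> a0; apply: dotv_eq0; rewrite -enorm_sq a0 expr0n. Qed.

Lemma enormZ n k (a : 'rV[R]_n) : enorm (k *: a) = `|k| * enorm a.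
Proof.
by rewrite /enorm dotvZl dotvZr mulrA -expr2 sqrtrM ?sqr_ge0 // sqrtr_sqr.
Qed.

Lemma enormN n (a : 'rV[R]_n) : enorm (- a) = enorm a.
Proof. by rewrite -scaleN1r enormZ normrN1 mul1r. Qed.

Lemma dotv_le_enorm n (a b : 'rV[R]_n) : dotv a b <= enorm a * enorm b.
Proof.
apply: le_trans (ler_norm _) _.
rewrite -ler_sqr ?nnegrE ?mulr_ge0 ?enorm_ge0 //.
by rewrite real_normK ?num_real // exprMn !enorm_sq cauchy_schwarz.
Qed.

Lemma enormD n (a b : 'rV[R]_n) : enorm (a + b) <= enorm a + enorm b.
Proof.
rewrite -ler_sqr ?nnegrE ?addr_ge0 ?enorm_ge0 //.
rewrite enorm_sq sqrrD !enorm_sq dotvDl !dotvDr (dotvC b a).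
have := dotv_le_enorm a b; lra.
Qed.

Lemma enorm_row_sq n m (a : 'rV[R]_n) (b : 'rV[R]_m) :
  enorm (row_mx a b) ^+ 2 = enorm a ^+ 2 + enorm b ^+ 2.
Proof. by rewrite !enorm_sq dotv_row. Qed.

Lemma enorm_rowl n m (a : 'rV[R]_n) (b : 'rV[R]_m) : enorm a <= enorm (row_mx a b).
Proof.
rewrite -ler_sqr ?nnegrE ?enorm_ge0 // enorm_row_sq lerDl.
exact: sqr_ge0.
Qed.

Lemma enorm_rowr n m (a : 'rV[R]_n) (b : 'rV[R]_m) : enorm b <= enorm (row_mx a b).
Proof.
rewrite -ler_sqr ?nnegrE ?enorm_ge0 // enorm_row_sq lerDr.
exact: sqr_ge0.
Qed.

Lemma enorm_row_le n m (a : 'rV[R]_n) (b : 'rV[R]_m) :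
  enorm (row_mx a b) <= enorm a + enorm b.
Proof.
rewrite -ler_sqr ?nnegrE ?addr_ge0 ?enorm_ge0 // enorm_row_sq sqrrD.
have := enorm_ge0 a; have := enorm_ge0 b; nra.
Qed.

Lemma enorm_row0l n m (b : 'rV[R]_m) : enorm (row_mx (0 : 'rV[R]_n) b) = enorm b.
Proof. by rewrite /enorm dotv_row dotv0l add0r. Qed.

Lemma enorm_row0r n m (a : 'rV[R]_n) : enorm (row_mx a (0 : 'rV[R]_m)) = enorm a.
Proof. by rewrite /enorm dotv_row dotv0l addr0. Qed.

Lemma enorm_rowNl n m (a : 'rV[R]_n) (b : 'rV[R]_m) :
  enorm (row_mx (- a) b) = enorm (row_mx a b).
Proof. by rewrite /enorm !dotv_row dotvNl dotvNr opprK. Qed.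

End EuclideanNorm.

Lemma sub_row_mx (R : zmodType) m n1 n2 (a c : 'M[R]_(m, n1)) (b d : 'M[R]_(m, n2)) :
  row_mx a b - row_mx c d = row_mx (a - c) (b - d).
Proof. by rewrite opp_row_mx add_row_mx. Qed.

Section Convergence.
Variable R : realType.
Implicit Types n m : nat.

Lemma seq_cvg_ext n (f g : nat -> 'rV[R]_n) l :
  (forall k, f k = g k) -> seq_cvg f l -> seq_cvg g l.
Proof. by move=> fg fl e e0; have [N HN] := fl e e0; exists N => k /HN; rewrite fg. Qed.

Lemma seq_cvg_le_sum n m p (f : nat -> 'rV[R]_n) (g : nat -> 'rV[R]_m) l l'
    (F : nat -> 'rV[R]_p) L :
  (forall k, enorm (F k - L) <= enorm (f k - l) + enorm (g k - l')) ->
  seq_cvg f l -> seq_cvg g l' -> seq_cvg F L.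
Proof.
move=> FL fl gl' e e0.
have [N1 H1] := fl (e / 2) (divr_gt0 e0 (ltr0Sn _ 1)).
have [N2 H2] := gl' (e / 2) (divr_gt0 e0 (ltr0Sn _ 1)).
exists (maxn N1 N2) => k Nk; apply: le_lt_trans (FL k) _.
have := H1 k (leq_trans (leq_maxl _ _) Nk); have := H2 k (leq_trans (leq_maxr _ _) Nk).
lra.
Qed.

Lemma seq_cvgD n (f g : nat -> 'rV[R]_n) l l' :
  seq_cvg f l -> seq_cvg g l' -> seq_cvg (fun k => f k + g k) (l + l').
Proof.
apply: seq_cvg_le_sum => k; rewrite opprD addrACA; exact: enormD.
Qed.

Lemma seq_cvgN n (f : nat -> 'rV[R]_n) l : seq_cvg f l -> seq_cvg (fun k => - f k) (- l).
Proof. by move=> fl e e0; have [N HN] := fl e e0; exists N => k; rewrite -opprD enormN; exact: HN. Qed.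

Lemma seq_cvgB n (f g : nat -> 'rV[R]_n) l l' :
  seq_cvg f l -> seq_cvg g l' -> seq_cvg (fun k => f k - g k) (l - l').
Proof. by move=> fl /seq_cvgN; apply: seq_cvgD. Qed.

Lemma seq_cvg_row n m (f : nat -> 'rV[R]_n) (g : nat -> 'rV[R]_m) l l' :
  seq_cvg f l -> seq_cvg g l' -> seq_cvg (fun k => row_mx (f k) (g k)) (row_mx l l').
Proof. by apply: seq_cvg_le_sum => k; rewrite sub_row_mx; exact: enorm_row_le. Qed.

Lemma seq_cvg_lsub n m (f : nat -> 'rV[R]_(n + m)) l :
  seq_cvg f l -> seq_cvg (fun k => lsubmx (f k)) (lsubmx l).
Proof.
move=> fl e e0; have [N HN] := fl e e0; exists N => k /HN; apply: le_lt_trans.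
by rewrite -linearB -{2}[f k - l]hsubmxK; exact: enorm_rowl.
Qed.

Lemma seq_cvg_rsub n m (f : nat -> 'rV[R]_(n + m)) l :
  seq_cvg f l -> seq_cvg (fun k => rsubmx (f k)) (rsubmx l).
Proof.
move=> fl e e0; have [N HN] := fl e e0; exists N => k /HN; apply: le_lt_trans.
by rewrite -linearB -{2}[f k - l]hsubmxK; exact: enorm_rowr.
Qed.

Lemma seq_cvg_uniq n (f : nat -> 'rV[R]_n) l l' : seq_cvg f l -> seq_cvg f l' -> l = l'.
Proof.
move=> fl fl'; apply/eqP; rewrite -subr_eq0; apply/eqP/enorm_eq0/eqP.
rewrite eq_le enorm_ge0 andbT; apply/ler_addgt0Pr => e e0; rewrite add0r.
have [N1 H1] := fl (e / 2) (divr_gt0 e0 (ltr0Sn _ 1)).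
have [N2 H2] := fl' (e / 2) (divr_gt0 e0 (ltr0Sn _ 1)).
set k := maxn N1 N2; have h1 := H1 k (leq_maxl _ _); have h2 := H2 k (leq_maxr _ _).
have -> : l - l' = - (f k - l) + (f k - l') by rewrite opprB addrA subrK.
apply: le_trans (enormD _ _) _; rewrite enormN; lra.
Qed.

End Convergence.

Section RegularNormal.
Variable R : realType.

Lemma reg_normal_pullback p q (A : 'rV[R]_p -> Prop) (B : 'rV[R]_q -> Prop)
    (g : 'rV[R]_q -> 'rV[R]_p) (a0 v : 'rV[R]_p) (b0 w : 'rV[R]_q) (C : R) :
  0 < C -> B b0 -> (forall b, B b -> A (g b)) ->
  (forall b, enorm (g b - a0) <= C * enorm (b - b0)) ->
  (forall b, dotv v (g b - a0) = dotv w (b - b0)) ->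
  reg_normal A a0 v -> reg_normal B b0 w.
Proof.
move=> C0 Bb0 gBA g_lip g_dot [_ nA]; split=> // eps eps0.
have [d d0 Hd] := nA (eps / C) (divr_gt0 eps0 C0).
exists (d / C) => [|b Bb bd]; first exact: divr_gt0.
have gd : enorm (g b - a0) < d.
  by apply: le_lt_trans (g_lip b) _; rewrite mulrC -ltr_pdivlMr.
rewrite -g_dot; apply: le_trans (Hd _ (gBA _ Bb) gd) _.
apply: le_trans (ler_wpM2l (ltW (divr_gt0 eps0 C0)) (g_lip b)) _.
by rewrite mulrA divfK ?gt_eqF.
Qed.

Lemma reg_normal_ray p (A : 'rV[R]_p -> Prop) (a0 v d : 'rV[R]_p) :
  (forall t, 0 < t -> A (a0 + t *: d)) -> reg_normal A a0 v -> dotv v d <= 0.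
Proof.
move=> ray [_ nA]; apply/ler_addgt0Pr => e e0; rewrite add0r.
have nd0 : 0 < enorm d + 1 by rewrite ltr_wpDl ?enorm_ge0.
set q := e / (enorm d + 1); have q0 : 0 < q by rewrite divr_gt0.
have qe : q * enorm d + q = e by rewrite -[q in _ + q]mulr1 -mulrDr divfK ?gt_eqF.
have [del del0 Hdel] := nA q q0.
set t := del / (enorm d + 1); have t0 : 0 < t by rewrite divr_gt0.
have td : t * enorm d < del.
  by rewrite /t mulrAC ltr_pdivrMr // ltr_pM2l // ltrDl.
have := Hdel _ (ray t t0); rewrite [a0 + _]addrC addrK dotvZr enormZ gtr0_norm //.
move=> /(_ td); rewrite mulrCA ler_pM2l // => vd.
have := enorm_ge0 d; nra.
Qed.

End RegularNormal.

Lemma gph_row_mx (R : realType) n m (P : 'rV[R]_n -> 'rV[R]_m -> Prop) x y :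
  gph P (row_mx x y) <-> P x y.
Proof. by rewrite /gph row_mxKl row_mxKr. Qed.

Section RegularNormalPhiOS.
Variables (R : realType) (n1 n2 : nat).
Variables (Omega : 'rV[R]_n1 -> Prop) (S : 'rV[R]_n1 -> 'rV[R]_n2 -> Prop).
Variables (x1 y1 xi1 z1 : 'rV[R]_n1) (x2 y2 xi2 z2 : 'rV[R]_n2).

Lemma gph_PhiOS_row (a1 b1 : 'rV[R]_n1) (a2 b2 : 'rV[R]_n2) :
  gph (PhiOS Omega S) (row_mx (row_mx a1 a2) (row_mx b1 b2)) <->
  Omega (b1 + a1) /\ S a1 (b2 + a2).
Proof. by rewrite gph_row_mx /PhiOS !row_mxKl !row_mxKr. Qed.

Hypothesis normal_PhiOS : reg_normal (gph (PhiOS Omega S))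
  (row_mx (row_mx x1 x2) (row_mx y1 y2)) (row_mx (row_mx xi1 xi2) (row_mx z1 z2)).

Let PhiOS_base_point : Omega (y1 + x1) /\ S x1 (y2 + x2).
Proof. by apply/gph_PhiOS_row; case: normal_PhiOS. Qed.

Lemma reg_normal_PhiOS_Omega : reg_normal Omega (y1 + x1) z1.
Proof.
have [Oxy Sxy] := PhiOS_base_point.
pose g w := row_mx (row_mx x1 x2) (row_mx (w - x1) y2).
have gE w : g w - row_mx (row_mx x1 x2) (row_mx y1 y2) =
            row_mx 0 (row_mx (w - (y1 + x1)) 0).
  by rewrite !sub_row_mx !subrr row_mx0 [y1 + x1]addrC opprD addrA.
apply: (reg_normal_pullback (g := g) ltr01 Oxy _ _ _ normal_PhiOS) => // w.
- by move=> Ow; apply/gph_PhiOS_row; rewrite subrK.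
- by rewrite gE enorm_row0l enorm_row0r mul1r.
- by rewrite gE !dotv_row !dotv0r add0r addr0.
Qed.

Lemma reg_normal_PhiOS_S :
  reg_normal (gph S) (row_mx x1 (y2 + x2)) (row_mx (xi1 - z1) z2).
Proof.
have [Oxy Sxy] := PhiOS_base_point.
pose g b := row_mx (row_mx (lsubmx b) x2) (row_mx (y1 + x1 - lsubmx b) (rsubmx b - x2)).
have gE a c : g (row_mx a c) - row_mx (row_mx x1 x2) (row_mx y1 y2) =
              row_mx (row_mx (a - x1) 0) (row_mx (- (a - x1)) (c - (y2 + x2))).
  rewrite !sub_row_mx row_mxKl row_mxKr subrr opprB [y2 + x2]addrC opprD addrA.
  by rewrite [y1 + x1 - a - y1]addrAC [y1 + x1]addrC addrK.
have Sb : gph S (row_mx x1 (y2 + x2)) by apply/gph_row_mx.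
apply: (reg_normal_pullback (g := g) (C := 2) _ Sb _ _ _ normal_PhiOS) => // b.
- by move=> Sb'; apply/gph_PhiOS_row; rewrite !subrK.
- rewrite -[b]hsubmxK gE sub_row_mx; apply: le_trans (enorm_row_le _ _) _.
  rewrite enorm_row0r enorm_rowNl mulr_natl mulr2n lerD ?enorm_rowl //.
- by rewrite -[b]hsubmxK gE sub_row_mx !dotv_row dotv0r addr0 dotvNr dotvBl addrA.
Qed.

Lemma reg_normal_PhiOS_eq : xi2 = z2.
Proof.
have [Oxy Sxy] := PhiOS_base_point.
set v := xi2 - z2.
have ray t : 0 < t -> gph (PhiOS Omega S)
    (row_mx (row_mx x1 x2) (row_mx y1 y2) + t *: row_mx (row_mx 0 v) (row_mx 0 (- v))).
  move=> _; rewrite !scale_row_mx !scaler0 !add_row_mx !addr0 gph_PhiOS_row.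
  by rewrite scalerN addrACA addNr addr0.
have := reg_normal_ray ray normal_PhiOS.
rewrite !dotv_row !dotv0r !add0r dotvNr -dotvBl -/v => vv.
by apply/subr0_eq/dotv_eq0/eqP; rewrite eq_le vv dotv_ge0.
Qed.

End RegularNormalPhiOS.

Section NormalsPhiOS.
Variables (R : realType) (n1 n2 : nat).
Variables (Omega : 'rV[R]_n1 -> Prop) (S : 'rV[R]_n1 -> 'rV[R]_n2 -> Prop).

Lemma reg_normal_PhiOS (x y xi z : 'rV[R]_(n1 + n2)) :
  reg_normal (gph (PhiOS Omega S)) (row_mx x y) (row_mx xi z) ->
  [/\ reg_normal Omega (lsubmx y + lsubmx x) (lsubmx z),
      reg_normal (gph S) (row_mx (lsubmx x) (rsubmx y + rsubmx x))
        (row_mx (lsubmx xi - lsubmx z) (rsubmx z)) &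
      rsubmx xi = rsubmx z].
Proof.
rewrite -[x]hsubmxK -[y]hsubmxK -[xi]hsubmxK -[z]hsubmxK !row_mxKl !row_mxKr.
move=> N; split; [exact: reg_normal_PhiOS_Omega N | exact: reg_normal_PhiOS_S N |
  exact: reg_normal_PhiOS_eq N].
Qed.

Lemma dir_normal_PhiOS (x y ux uy xi z : 'rV[R]_(n1 + n2)) :
  dir_normal (gph (PhiOS Omega S)) (row_mx x y) (row_mx ux uy) (row_mx xi z) ->
  [/\ dir_normal Omega (lsubmx y + lsubmx x) (lsubmx uy + lsubmx ux) (lsubmx z),
      dir_normal (gph S) (row_mx (lsubmx x) (rsubmx y + rsubmx x))
        (row_mx (lsubmx ux) (rsubmx uy + rsubmx ux))
        (row_mx (lsubmx xi - lsubmx z) (rsubmx z)) &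
      rsubmx xi = rsubmx z].
Proof.
move=> [t [w [nu [t0 t_to0 w_to nu_to Nk]]]].
have Nk' k := @reg_normal_PhiOS (x + t k *: lsubmx (w k)) (y + t k *: rsubmx (w k))
  (lsubmx (nu k)) (rsubmx (nu k)).
have {Nk Nk'} N k := Nk' k ltac:(by rewrite !hsubmxK -add_row_mx -scale_row_mx hsubmxK).
have := seq_cvg_lsub w_to; rewrite row_mxKl => wl_to.
have := seq_cvg_rsub w_to; rewrite row_mxKr => wr_to.
have := seq_cvg_lsub nu_to; rewrite row_mxKl => nul_to.
have := seq_cvg_rsub nu_to; rewrite row_mxKr => nur_to.
split.
- exists t, (fun k => lsubmx (rsubmx (w k)) + lsubmx (lsubmx (w k))),
    (fun k => lsubmx (rsubmx (nu k))); split => //.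
  + exact: seq_cvgD (seq_cvg_lsub wr_to) (seq_cvg_lsub wl_to).
  + exact: seq_cvg_lsub nur_to.
  + move=> k /=; have [+ _ _] := N k.
    by rewrite !linearD !linearZ /= addrACA.
- exists t, (fun k => row_mx (lsubmx (lsubmx (w k)))
                             (rsubmx (rsubmx (w k)) + rsubmx (lsubmx (w k)))),
    (fun k => row_mx (lsubmx (lsubmx (nu k)) - lsubmx (rsubmx (nu k)))
                     (rsubmx (rsubmx (nu k)))); split => //.
  + exact: seq_cvg_row (seq_cvg_lsub wl_to)
             (seq_cvgD (seq_cvg_rsub wr_to) (seq_cvg_rsub wl_to)).
  + exact: seq_cvg_row (seq_cvgB (seq_cvg_lsub nul_to) (seq_cvg_lsub nur_to))
             (seq_cvg_rsub nur_to).
  + move=> k /=; have [_ + _] := N k.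
    by rewrite !linearD !linearZ /= scale_row_mx add_row_mx addrACA scalerDr.
- apply: seq_cvg_uniq (seq_cvg_rsub nul_to) _.
  by apply: seq_cvg_ext (seq_cvg_rsub nur_to) => k; have [_ _ ->] := N k.
Qed.

Lemma PhiOS_violated_thm7_violated (xb1 u1 : 'rV[R]_n1) (xb2 u2 : 'rV[R]_n2)
    (condP : 'rV[R]_(n1 + n2) -> 'rV[R]_(n1 + n2) -> Prop)
    (cond : 'rV[R]_n1 -> 'rV[R]_n1 -> Prop) :
  (forall lam1 v, condP (row_mx lam1 0) v -> cond lam1 (lsubmx v)) ->
  dir_normality_violated (PhiOS Omega S) (row_mx xb1 xb2) 0 (row_mx u1 u2) condP ->
  thm7_violated Omega S xb1 xb2 u1 u2 cond.
Proof.
move=> cond_lift [lam [lam0 [dirN [x [y [lamk [eta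
  [Phixy [x_ne [x_to [y_to [lamk_to [eta_to [dir_to [y_rate [regN condk]]]]]]]]]]]]]]]].
have [dirO dirS lam2] := dir_normal_PhiOS dirN.
have lam2_0 : rsubmx lam = 0.
  by move: lam2; rewrite linear0 linearN => /eqP; rewrite eq_sym oppr_eq0 => /eqP.
have lamE : row_mx (lsubmx lam) 0 = lam by rewrite -lam2_0 hsubmxK.
have regk k := reg_normal_PhiOS (regN k).
exists (lsubmx lam); split.
  by apply: contra lam0 => /eqP lam1_0; rewrite -lamE lam1_0 row_mx0.
split.
  move: dirS; rewrite /dir_coderiv !linear0 !linearN /= !row_mxKl !row_mxKr.
  by rewrite !add0r opprK lam2_0 oppr0.
split.
  by move: dirO; rewrite !linear0 linearN /= !row_mxKl !add0r.
exists x, y, (fun k => lsubmx (lamk k)), (fun k => lsubmx (eta k)),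
  (fun k => rsubmx (lamk k)).
do 4 (split=> //).
split; first exact: seq_cvg_lsub lamk_to.
split; first by have := seq_cvg_rsub lamk_to; rewrite lam2_0.
split; first by have := seq_cvg_lsub eta_to; rewrite linear0.
split=> //.
split; first by apply: seq_cvg_ext y_rate => k; rewrite subr0.
split.
  move=> k; have [_ + _] := regk k.
  by rewrite /reg_coderiv !linearN /= opprK [rsubmx (y k) + _]addrC.
split.
  by move=> k; have [+ _ _] := regk k; rewrite linearN [lsubmx (y k) + _]addrC.
by move=> k; apply: cond_lift; rewrite lamE -(subr0 (y k)).
Qed.

End NormalsPhiOS.

Lemma prod_basis_lshift (R : realType) n1 n2 (e1 : 'I_n1 -> 'rV[R]_n1)
    (e2 : 'I_n2 -> 'rV[R]_n2) (i : 'I_n1) :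
  prod_basis e1 e2 (lshift n2 i) = row_mx (e1 i) 0.
Proof. by rewrite /prod_basis -[lshift n2 i]/(unsplit (inl i)) unsplitK. Qed.

Theorem mainTheorem7 (R : realType) (n1 n2 : nat)
  (S : 'rV[R]_n1 -> 'rV[R]_n2 -> Prop) (Omega : 'rV[R]_n1 -> Prop)
  (xb1 : 'rV[R]_n1) (xb2 : 'rV[R]_n2) (u1 : 'rV[R]_n1) (u2 : 'rV[R]_n2) :
  closed_set (gph S) -> closed_set Omega ->
  PhiOS Omega S (row_mx xb1 xb2) 0 ->
  unit_sphere (row_mx u1 u2) ->
  (~ thm7_violated Omega S xb1 xb2 u1 u2 (fun lam y1 => 0 < dotv lam y1) ->
     dir_pseudo_normal (PhiOS Omega S) (row_mx xb1 xb2) 0 (row_mx u1 u2)) /\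
  (forall (e1 : 'I_n1 -> 'rV[R]_n1) (e2 : 'I_n2 -> 'rV[R]_n2),
     orthonormal_basis e1 -> orthonormal_basis e2 ->
     ~ thm7_violated Omega S xb1 xb2 u1 u2
         (fun lam y1 => forall i : 'I_n1, dotv lam (e1 i) != 0 ->
                          0 < dotv lam (e1 i) * dotv y1 (e1 i)) ->
     dir_quasi_normal (PhiOS Omega S) (row_mx xb1 xb2) 0 (row_mx u1 u2)
       (prod_basis e1 e2)).
Proof.
move=> _ _ _ _; split=> [|e1 e2 _ _] no_violation violation;
  apply/no_violation/(PhiOS_violated_thm7_violated _ violation) => lam1 v.
  by rewrite dotv_row0l.
move=> sgn i lam_i; have := sgn (lshift n2 i).
rewrite prod_basis_lshift dotv_row0l row_mxKl (dotvC v) dotv_row0l.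
by rewrite (dotvC (lsubmx v)); apply.
Qed.
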